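(* Let $G$ be a directed graph with distinct vertices $s,t$. An augmented $s$-$t$ path graph of $G$ has the same set of minimum $s$-$t$ cuts as $G$.
   Context: An $s$-$t$ cut of a directed graph is a set of edges whose removal leaves no directed $s$-$t$ path; a minimum $s$-$t$ cut is one of minimum cardinality $\lambda(G)$. An augmented $s$-$t$ path graph of $G$ is constructed as follows: take a collection $\mathcal P$ of $\lambda(G)$ pairwise edge-disjoint directed $s$-$t$ paths of $G$ and let $H$ be the graph formed by the union of these paths (its vertex set $V(H)$ is covered by $\mathcal P$, and its edges are the path edges); then add to $H$ a (non-path) edge $(u,v)$ for any two vertices $u,v\in V(H)$ such that $v$ is reachable from $u$ in $G$ by a directed path all of whose internal vertices lie in $V(G)\setminus V(H)$ (in particular, whenever $(u,v)$ is an edge of $G$). *)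

From mathcomp Require Import all_boot.
Set Implicit Arguments. Unset Strict Implicit. Unset Printing Implicit Defensive.

Definition step_in (V Ed : finType) (src dst : Ed -> V) (F : {set Ed}) : rel V :=
  fun x y => [exists e in F, (src e == x) && (dst e == y)].

(* C is an s-t cut of the graph with edge set E: C is a set of edges whose
   removal leaves no directed s-t path (= no directed s-t walk). *)
Definition is_st_cut (V Ed : finType) (src dst : Ed -> V) (E : {set Ed})
  (s t : V) (C : {set Ed}) : Prop :=
  C \subset E /\ ~~ connect (step_in src dst (E :\: C)) s t.

Definition is_min_st_cut (V Ed : finType) (src dst : Ed -> V) (E : {set Ed})
  (s t : V) (C : {set Ed}) : Prop :=
  is_st_cut src dst E s t C /\
  forall C', is_st_cut src dst E s t C' -> #|C| <= #|C'|.

Definition Gcut (V : finType) (E : {set V * V}) := is_st_cut (@fst V V) (@snd V V) E.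
Definition Gmincut (V : finType) (E : {set V * V}) := is_min_st_cut (@fst V V) (@snd V V) E.

Definition lambda_is (V : finType) (E : {set V * V}) (s t : V) (k : nat) : Prop :=
  (exists C, Gmincut E s t C /\ #|C| = k).

Definition is_st_path (V : finType) (E : {set V * V}) (s t : V) (p : seq V) : bool :=
  [&& path (fun x y => (x, y) \in E) s p, last s p == t & uniq (s :: p)].

Definition path_edges (V : finType) (s : V) (p : seq V) : {set V * V} :=
  [set e | e \in zip (s :: p) p].

Section Aug.
Variables (V : finType) (E : {set V * V}) (s : V) (k : nat) (P : 'I_k -> seq V).

Definition VH : {set V} := [set v | [exists i, v \in s :: P i]].
Definition PE : {set V * V} := \bigcup_(i < k) path_edges s (P i).

(* v is reachable from u in G by a directed path all of whose internal vertices
   lie outside V(H), excluding the trivial witness consisting of a single path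
   edge (which is already an edge of H): either (u,v) is a non-path edge of G,
   or there is a path u -> w1 ~> w2 -> v with w1 ... w2 outside V(H). *)
Definition outside_reach (u v : V) : bool :=
  (((u, v) \in E) && ((u, v) \notin PE)) ||
  [exists w1, exists w2,
     [&& w1 \notin VH, w2 \notin VH, (u, w1) \in E, (w2, v) \in E &
         connect (fun x y => [&& x \notin VH, y \notin VH & (x, y) \in E]) w1 w2]].

(* edges of the augmented graph: ((u,v), true) are the path edges (u,v) of H,
   ((u,v), false) are the added non-path edges (u,v). *)
Definition aug_edges : {set (V * V) * bool} :=
  [set e | if e.2 then e.1 \in PE
           else [&& e.1.1 \in VH, e.1.2 \in VH, e.1.1 != e.1.2 & outside_reach e.1.1 e.1.2]].

End Aug.

Definition aug_src (V : finType) (e : (V * V) * bool) : V := e.1.1.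
Definition aug_dst (V : finType) (e : (V * V) * bool) : V := e.1.2.

Definition Hmincut (V : finType) (E : {set V * V}) (s t : V) (k : nat) (P : 'I_k -> seq V) :=
  is_min_st_cut (@aug_src V) (@aug_dst V) (aug_edges E s P) s t.

Definition as_path_edges (V : finType) (C : {set V * V}) : {set (V * V) * bool} :=
  [set (e, true) | e in C].

(* Every s-t cut of G, and every s-t cut of the augmented graph H, meets each of
   the k = lambda(G) edge-disjoint paths, so it has at least k edges; a cut with
   exactly k edges therefore consists of path edges, one on each path. For a set
   C of path edges, removing C separates t from s in G iff it does in H: an
   edge of H surviving C is realized in G by a non-path edge or by a walk whose
   internal vertices avoid V(H), hence by edges outside C; conversely, a walk of
   G avoiding C, split at its visits to V(H), is a sequence of edges of H that
   survive C. So the minimum cuts of both graphs are the cuts of size k made of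
   path edges. *)
From mathcomp Require Import all_boot.
Set Implicit Arguments. Unset Strict Implicit. Unset Printing Implicit Defensive.

Lemma mem_zip (S T : eqType) (s : seq S) (t : seq T) x y :
  (x, y) \in zip s t -> (x \in s) && (y \in t).
Proof.
elim: s t => [|a s IH] [|b t] //=; rewrite !in_cons.
by case/orP => [/eqP [-> ->] | /IH /andP [-> ->]]; rewrite ?eqxx ?orbT.
Qed.

Lemma path_zipP (T : eqType) (r : rel T) x p :
  reflect (forall y z, (y, z) \in zip (x :: p) p -> r y z) (path r x p).
Proof.
apply: (iffP idP).
  elim: p x => [|y p IH] x //= /andP [xy yp] u v.
  by rewrite in_cons => /orP [/eqP [-> ->] // | ]; apply: IH.
elim: p x => [|y p IH] x //= r_zip; rewrite r_zip ?mem_head //=.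
by apply: IH => u v uv; apply: r_zip; rewrite in_cons uv orbT.
Qed.

Lemma connect_preserved (T : finType) (e : rel T) (a : pred T) x y :
  (forall u v, e u v -> a u -> a v) -> connect e x y -> a x -> a y.
Proof.
move=> a_e /connectP [p + ->]; elim: p x => [|z p IH] x //= /andP [xz zp] ax.
by apply: IH zp _; apply: a_e xz ax.
Qed.

Section HittingSet.
Variables (T : finType) (k : nat) (S : 'I_k -> {set T}) (X : {set T}).
Hypothesis S_disjoint : forall i j, i != j -> [disjoint S i & S j].
Hypothesis X_meets : forall i, X :&: S i != set0.

Let pick i : T := xchoose (elimT (set0Pn _) (X_meets i)).
Let pickP i : pick i \in X :&: S i := xchooseP (elimT (set0Pn _) (X_meets i)).

Let pick_inj : injective pick.
Proof.
move=> i j eq_ij; apply/eqP; apply: contraT => neq_ij.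
have /setIP [_ pick_i] := pickP i; have /setIP [_ pick_j] := pickP j.
by rewrite -eq_ij (disjointFr (S_disjoint neq_ij) pick_i) in pick_j.
Qed.

Let card_picks : #|pick @: setT| = k.
Proof. by rewrite card_imset // cardsT card_ord. Qed.

Let picks_sub : pick @: setT \subset X.
Proof. by apply/subsetP => _ /imsetP [i _ ->]; case/setIP: (pickP i). Qed.

Lemma hitting_set_card_ge : k <= #|X|.
Proof. by rewrite -card_picks subset_leq_card. Qed.

Lemma hitting_set_sub_bigcup : #|X| <= k -> X \subset \bigcup_i S i.
Proof.
move=> X_le; have /eqP <- : pick @: setT == X.
  by rewrite eqEcard picks_sub card_picks.
apply/subsetP => _ /imsetP [i _ ->]; apply/bigcupP; exists i => //.
by case/setIP: (pickP i).
Qed.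

End HittingSet.

Lemma st_cut_meets_walk (V Ed : finType) (src dst : Ed -> V) (E C : {set Ed})
    (s t : V) (f : V * V -> Ed) (p : seq V) :
  is_st_cut src dst E s t C -> last s p = t ->
  (forall x y, (x, y) \in zip (s :: p) p ->
     [/\ f (x, y) \in E, src (f (x, y)) = x & dst (f (x, y)) = y]) ->
  C :&: f @: path_edges s p != set0.
Proof.
move=> [_ not_st] p_t p_edges; apply: contra not_st => /eqP C_miss.
apply/connectP; exists p => //; apply/path_zipP => x y xy_p.
have [fE fx fy] := p_edges x y xy_p.
apply/existsP; exists (f (x, y)); rewrite fx fy !eqxx !andbT in_setD fE andbT.
apply/negP => fC; have : f (x, y) \in C :&: f @: path_edges s p.
  by rewrite inE fC imset_f // inE.
by rewrite C_miss inE.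
Qed.

Lemma min_st_cutP (V Ed : finType) (src dst : Ed -> V) (E : {set Ed}) (s t : V)
    (k : nat) (C0 : {set Ed}) :
  (forall C, is_st_cut src dst E s t C -> k <= #|C|) ->
  is_st_cut src dst E s t C0 -> #|C0| = k ->
  forall C, is_min_st_cut src dst E s t C <-> is_st_cut src dst E s t C /\ #|C| = k.
Proof.
move=> cut_ge C0_cut C0k C; split => [[C_cut C_min] | [C_cut Ck]].
  by split=> //; apply/eqP; rewrite eqn_leq cut_ge // andbT -C0k C_min.
by split=> // C' C'_cut; rewrite Ck cut_ge.
Qed.

Lemma step_in_pair (V : finType) (F : {set V * V}) x y :
  step_in (@fst V V) (@snd V V) F x y = ((x, y) \in F).
Proof.
apply/existsP/idP => [[[u v] /and3P [uvF /eqP <- /eqP <-]] // | xyF].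
by exists (x, y); rewrite xyF !eqxx.
Qed.

Lemma step_in_aug (V : finType) (F : {set (V * V) * bool}) x y :
  step_in (@aug_src V) (@aug_dst V) F x y =
  (((x, y), true) \in F) || (((x, y), false) \in F).
Proof.
apply/existsP/orP => [[[[u v] b] /and3P [uvF /eqP <- /eqP <-]] | ].
  by case: b uvF => uvF; [left | right].
by case=> xyF; [exists ((x, y), true) | exists ((x, y), false)];
  rewrite xyF /aug_src /aug_dst /= !eqxx.
Qed.

Lemma mem_as_path_edges (V : finType) (C : {set V * V}) e b :
  ((e, b) \in as_path_edges C) = b && (e \in C).
Proof.
case: b; last by apply/imsetP => -[x _ []].
by apply/imsetP/idP => [[x xC [->]] // | eC]; exists e.
Qed.

Lemma card_as_path_edges (V : finType) (C : {set V * V}) :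
  #|as_path_edges C| = #|C|.
Proof. by rewrite card_imset // => e1 e2 []. Qed.

Section AugmentedPathGraph.
Variables (V : finType) (E : {set V * V}) (s t : V) (k : nat) (P : 'I_k -> seq V).
Hypothesis P_path : forall i, is_st_path E s t (P i).
Hypothesis P_disjoint :
  forall i j, i != j -> [disjoint path_edges s (P i) & path_edges s (P j)].

Local Notation Gstep C := (step_in (@fst V V) (@snd V V) (E :\: C)).
Local Notation Hstep D := (step_in (@aug_src V) (@aug_dst V) (aug_edges E s P :\: D)).
Local Notation G_cut := (is_st_cut (@fst V V) (@snd V V) E s t).
Local Notation H_cut := (is_st_cut (@aug_src V) (@aug_dst V) (aug_edges E s P) s t).
Local Notation outside_step :=
  (fun x y => [&& x \notin VH s P, y \notin VH s P & (x, y) \in E]).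

Lemma PE_sub_E : PE s P \subset E.
Proof.
apply/subsetP => -[x y] /bigcupP [i _]; rewrite inE.
by case/and3P: (P_path i) => /path_zipP walk _ _; apply: walk.
Qed.

Lemma PE_VH x y : (x, y) \in PE s P -> (x \in VH s P) && (y \in VH s P).
Proof.
case/bigcupP => i _; rewrite inE => /mem_zip /andP [x_i y_i].
by rewrite !inE; apply/andP; split; apply/existsP; exists i; rewrite // mem_behead.
Qed.

Lemma source_in_VH (i : 'I_k) : s \in VH s P.
Proof. by rewrite inE; apply/existsP; exists i; rewrite mem_head. Qed.

Lemma target_in_VH (i : 'I_k) : t \in VH s P.
Proof.
case/and3P: (P_path i) => _ /eqP <- _.
by rewrite inE; apply/existsP; exists i; rewrite mem_last.
Qed.

Lemma outside_reach_connect (C : {set V * V}) u v : C \subset PE s P ->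
  outside_reach E s P u v -> connect (Gstep C) u v.
Proof.
move=> C_PE; have edge x y : (x, y) \in E -> (x, y) \notin PE s P ->
    connect (Gstep C) x y.
  move=> xyE xy_PE; apply: connect1; rewrite step_in_pair in_setD xyE andbT.
  by apply: contra xy_PE => /(subsetP C_PE).
have outside_edge x y : (x, y) \in E -> (x \notin VH s P) || (y \notin VH s P) ->
    connect (Gstep C) x y.
  by move=> xyE out; apply: edge => //; apply: contraL out => /PE_VH /andP [-> ->].
case/orP => [/andP [uvE uv_PE] | /existsP [w1 /existsP [w2]]]; first exact: edge.
case/and5P => w1_out w2_out uw1 w2v w1w2.
apply: connect_trans (outside_edge _ _ uw1 _) _; first by rewrite w1_out orbT.
apply: connect_trans (outside_edge _ _ w2v _); last by rewrite w2_out.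
apply: connect_sub w1w2 => x y /and3P [x_out y_out xyE].
by apply: outside_edge; rewrite ?x_out.
Qed.

Lemma aug_connect_sub (C : {set V * V}) x y : C \subset PE s P ->
  connect (Hstep (as_path_edges C)) x y -> connect (Gstep C) x y.
Proof.
move=> C_PE; apply: connect_sub => u v.
rewrite step_in_aug !in_setD !mem_as_path_edges !inE /=.
case/orP => [/andP [uvC uv_PE] | /and4P [_ _ _]]; last exact: outside_reach_connect.
by apply: connect1; rewrite step_in_pair in_setD uvC (subsetP PE_sub_E).
Qed.

Lemma outside_reach_aug_connect (C : {set V * V}) a b :
  a \in VH s P -> b \in VH s P ->
  outside_reach E s P a b -> connect (Hstep (as_path_edges C)) a b.
Proof.
move=> aV bV ab; have [<- | neq_ab] := eqVneq a b; first exact: connect0.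
apply: connect1; rewrite step_in_aug; apply/orP; right.
by rewrite in_setD mem_as_path_edges inE /= aV bV neq_ab ab.
Qed.

Lemma edge_aug_connect (C : {set V * V}) a b : a \in VH s P -> b \in VH s P ->
  (a, b) \in E :\: C -> connect (Hstep (as_path_edges C)) a b.
Proof.
move=> aV bV /setDP [abE abC]; have [ab_PE | ab_PE] := boolP ((a, b) \in PE s P).
  apply: connect1; rewrite step_in_aug; apply/orP; left.
  by rewrite in_setD mem_as_path_edges inE /= abC ab_PE.
by apply: outside_reach_aug_connect; rewrite // /outside_reach abE ab_PE.
Qed.

Lemma connect_sub_aug (C : {set V * V}) x y : x \in VH s P -> y \in VH s P ->
  connect (Gstep C) x y -> connect (Hstep (as_path_edges C)) x y.
Proof.
move=> xV yV; pose reached z :=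
  if z \in VH s P then connect (Hstep (as_path_edges C)) x z else
  [exists a, exists w, [&& connect (Hstep (as_path_edges C)) x a, a \in VH s P,
     (a, w) \in E, w \notin VH s P & connect outside_step w z]].
suff reached_step u v : Gstep C u v -> reached u -> reached v.
  move=> xy; have := connect_preserved reached_step xy.
  by rewrite /reached xV yV connect0; apply.
rewrite step_in_pair => uv_EC; have /setDP [uvE _] := uv_EC.
rewrite /reached; case: ifP => uV; case: ifP => vV.
- by move=> xu; apply: connect_trans xu (edge_aug_connect uV vV uv_EC).
- move=> xu; apply/existsP; exists u; apply/existsP; exists v.
  by rewrite xu uV uvE vV connect0.
- case/existsP => a /existsP [w /and5P [xa aV aw w_out wu]].
  apply: connect_trans xa (outside_reach_aug_connect _ aV vV _).
  apply/orP; right; apply/existsP; exists w; apply/existsP; exists u.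
  by rewrite w_out uV aw uvE.
- case/existsP => a /existsP [w /and5P [xa aV aw w_out wu]].
  apply/existsP; exists a; apply/existsP; exists w; rewrite xa aV aw w_out /=.
  by apply: connect_trans wu (connect1 _); rewrite uV vV uvE.
Qed.

Hypothesis lambda_k : lambda_is E s t k.

Lemma aug_cutP (C : {set V * V}) :
  C \subset PE s P -> H_cut (as_path_edges C) <-> G_cut C.
Proof.
move=> C_PE; split=> -[_ not_st]; split.
- exact: subset_trans C_PE PE_sub_E.
- have [k0 | k_gt0] := posnP k.
    (* lambda(G) = 0: the empty set is already an s-t cut of G. *)
    case: lambda_k => C0 [[[_ C0_cut] _] C0k]; apply: contra C0_cut.
    have -> : C0 = set0 by apply/eqP; rewrite -cards_eq0 C0k k0.
    apply: connect_sub => u v; rewrite step_in_pair in_setD => /andP [_ uvE].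
    by apply: connect1; rewrite step_in_pair in_setD in_set0 uvE.
  apply: contra not_st; apply: connect_sub_aug.
    exact: source_in_VH (Ordinal k_gt0).
  exact: target_in_VH (Ordinal k_gt0).
- apply/subsetP => _ /imsetP [e eC ->]; rewrite inE /=; exact: subsetP C_PE e eC.
- by apply: contra not_st; apply: aug_connect_sub.
Qed.

Lemma G_cut_meets_path i (C : {set V * V}) :
  G_cut C -> C :&: path_edges s (P i) != set0.
Proof.
move=> C_cut; case/and3P: (P_path i) => /path_zipP walk /eqP p_t _.
have := st_cut_meets_walk (f := fun e => e) C_cut p_t; rewrite imset_id.
by apply=> x y /walk.
Qed.

Lemma H_cut_meets_path i (D : {set (V * V) * bool}) : H_cut D ->
  D :&: as_path_edges (path_edges s (P i)) != set0.
Proof.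
move=> D_cut; case/and3P: (P_path i) => _ /eqP p_t _.
apply: (st_cut_meets_walk (f := fun e => (e, true)) D_cut p_t) => x y xy_p.
by split=> //; rewrite inE; apply/bigcupP; exists i; rewrite ?inE.
Qed.

Let tagged_paths_disjoint i j : i != j ->
  [disjoint as_path_edges (path_edges s (P i)) & as_path_edges (path_edges s (P j))].
Proof. by move=> neq_ij; rewrite imset_disjoint ?P_disjoint // => e1 e2 []. Qed.

Lemma G_cut_card_ge (C : {set V * V}) : G_cut C -> k <= #|C|.
Proof.
by move=> C_cut; apply: hitting_set_card_ge P_disjoint _ => i; apply: G_cut_meets_path.
Qed.

Lemma G_cut_sub_PE (C : {set V * V}) : G_cut C -> #|C| <= k -> C \subset PE s P.
Proof.
by move=> C_cut; apply: hitting_set_sub_bigcup P_disjoint _ => i; apply: G_cut_meets_path.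
Qed.

Lemma H_cut_card_ge (D : {set (V * V) * bool}) : H_cut D -> k <= #|D|.
Proof.
move=> D_cut; apply: hitting_set_card_ge tagged_paths_disjoint _ => i.
exact: H_cut_meets_path.
Qed.

Lemma H_cut_sub_PE (D : {set (V * V) * bool}) : H_cut D -> #|D| <= k ->
  exists2 C : {set V * V}, C \subset PE s P & D = as_path_edges C.
Proof.
move=> D_cut D_le; have D_sub := hitting_set_sub_bigcup tagged_paths_disjoint
  (fun i => H_cut_meets_path i D_cut) D_le.
exists [set e | (e, true) \in D].
  apply/subsetP => e; rewrite inE => /(subsetP D_sub) /bigcupP [i _].
  by rewrite mem_as_path_edges => e_i; apply/bigcupP; exists i.
apply/setP => -[e b]; rewrite mem_as_path_edges inE; case: b => //=.
by apply/negbTE/negP => /(subsetP D_sub) /bigcupP [i _]; rewrite mem_as_path_edges.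
Qed.

End AugmentedPathGraph.

Theorem claim6 (V : finType) (E : {set V * V}) (s t : V) (k : nat)
  (P : 'I_k -> seq V) :
  s != t ->
  lambda_is E s t k ->
  (forall i, is_st_path E s t (P i)) ->
  (forall i j, i != j -> [disjoint path_edges s (P i) & path_edges s (P j)]) ->
  forall D : {set (V * V) * bool},
    Hmincut E s t P D <-> exists C, Gmincut E s t C /\ D = as_path_edges C.
Proof.
(* [s != t] is implied by [lambda_is]: no set of edges separates a vertex from itself. *)
move=> _ lambda_k P_path P_disjoint D.
have [C0 [[C0_cut _] C0k]] := lambda_k.
have C0_PE := G_cut_sub_PE P_path P_disjoint C0_cut (eq_leq C0k).
have HC0_cut := (aug_cutP P_path lambda_k C0_PE).2 C0_cut.
have minG := min_st_cutP (G_cut_card_ge P_path P_disjoint) C0_cut C0k.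
have minH := min_st_cutP (H_cut_card_ge P_path P_disjoint) HC0_cut
  (etrans (card_as_path_edges C0) C0k).
split=> [/minH [D_cut Dk] | [C [/minG [C_cut Ck] ->]]].
  have [C C_PE DC] := H_cut_sub_PE P_path P_disjoint D_cut (eq_leq Dk).
  exists C; split=> //; apply/minG; split.
    by apply/(aug_cutP P_path lambda_k C_PE); rewrite -DC.
  by rewrite -card_as_path_edges -DC.
have C_PE := G_cut_sub_PE P_path P_disjoint C_cut (eq_leq Ck).
apply/minH; split; last by rewrite card_as_path_edges.
exact/(aug_cutP P_path lambda_k C_PE).
Qed.
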